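(* In the upper half-space model $\mathbb{H}^3=\{x_3>0\}$ with metric $\frac{1}{x_3^2}(dx_1^2+dx_2^2+dx_3^2)$, let $\gamma:[0,\infty)\to\mathbb{H}^3$, $\gamma(s)=(\gamma_1(s),0,\gamma_2(s))$, be a regular curve parametrized by hyperbolic arc length with $\gamma_1>0$, $\gamma_2>0$, and set $x_g(\gamma([0,s]))=\frac{1}{s}\int_0^s\frac{\gamma_1(t)}{\gamma_2(t)}\,dt$. Suppose $\gamma$ has confined centroid, i.e. $\lim_{s\to\infty}x_g(\gamma([0,s]))$ exists and is finite. Then the end of revolution $f(\theta,s)=R_\theta\gamma(s)$ is parabolic.
   Context: $R_\theta$ is the rotation of angle $\theta$ about the $x_3$-axis, an isometry of $\mathbb{H}^3$. The end carries the induced metric. An end is parabolic if every bounded harmonic function on it is determined by its boundary values. *)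

From Stdlib Require Import Reals.
From Coquelicot Require Import Coquelicot.
Open Scope R_scope.

Definition pt3 := (R * R * R)%type.
Definition c1 (p : pt3) : R := fst (fst p).
Definition c2 (p : pt3) : R := snd (fst p).
Definition c3 (p : pt3) : R := snd p.

Definition Rot (th : R) (p : pt3) : pt3 :=
  (c1 p * cos th - c2 p * sin th, c1 p * sin th + c2 p * cos th, c3 p).

Definition end_rev (g1 g2 : R -> R) (th s : R) : pt3 := Rot th (g1 s, 0, g2 s).

Definition d_th (F : R -> R -> R) (th s : R) : R := Derive (fun t => F t s) th.
Definition d_s  (F : R -> R -> R) (th s : R) : R := Derive (fun t => F th t) s.

(* Induced metric from the hyperbolic metric (1/x3^2)(dx1^2+dx2^2+dx3^2):
   g_ij = (1/f3^2) <d_i f, d_j f>. *)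
Section Metric.
Variable f : R -> R -> pt3.
Let f1 th s := c1 (f th s).
Let f2 th s := c2 (f th s).
Let f3 th s := c3 (f th s).
Definition gTT (th s : R) : R :=
  / (f3 th s)^2 * ((d_th f1 th s)^2 + (d_th f2 th s)^2 + (d_th f3 th s)^2).
Definition gTS (th s : R) : R :=
  / (f3 th s)^2 * (d_th f1 th s * d_s f1 th s + d_th f2 th s * d_s f2 th s
                   + d_th f3 th s * d_s f3 th s).
Definition gSS (th s : R) : R :=
  / (f3 th s)^2 * ((d_s f1 th s)^2 + (d_s f2 th s)^2 + (d_s f3 th s)^2).
Definition gdet (th s : R) : R := gTT th s * gSS th s - (gTS th s)^2.
(* Laplace-Beltrami operator of the induced metric in the chart (theta, s):
   Delta u = (1/sqrt|g|) d_i (sqrt|g| g^{ij} d_j u). *)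
Definition laplace_beltrami (u : R -> R -> R) (th s : R) : R :=
  / sqrt (gdet th s) *
  ( d_th (fun a b => sqrt (gdet a b) *
            (gSS a b / gdet a b * d_th u a b - gTS a b / gdet a b * d_s u a b)) th s
  + d_s  (fun a b => sqrt (gdet a b) *
            (- gTS a b / gdet a b * d_th u a b + gTT a b / gdet a b * d_s u a b)) th s).
End Metric.

Definition uncurry2 (u : R -> R -> R) (p : R * R) : R := u (fst p) (snd p).

Definition C2_interior (u : R -> R -> R) : Prop :=
  forall th s, 0 < s ->
    ex_derive (fun t => u t s) th /\ ex_derive (fun t => u th t) s /\
    ex_derive (fun t => d_th u t s) th /\ ex_derive (fun t => d_th u th t) s /\
    ex_derive (fun t => d_s u t s) th /\ ex_derive (fun t => d_s u th t) s /\
    continuous (uncurry2 u) (th, s) /\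
    continuous (uncurry2 (d_th u)) (th, s) /\ continuous (uncurry2 (d_s u)) (th, s) /\
    continuous (uncurry2 (d_th (d_th u))) (th, s) /\
    continuous (uncurry2 (d_s (d_th u))) (th, s) /\
    continuous (uncurry2 (d_th (d_s u))) (th, s) /\
    continuous (uncurry2 (d_s (d_s u))) (th, s).

(* A bounded harmonic function on the end S^1 x [0, oo) (theta taken 2pi-periodic),
   continuous up to the boundary {s = 0}, harmonic in the interior. *)
Definition bounded_harmonic_on_end (f : R -> R -> pt3) (u : R -> R -> R) : Prop :=
  (forall th s, u (th + 2 * PI) s = u th s) /\
  (forall th s, 0 <= s ->
     filterlim (uncurry2 u) (within (fun p : R * R => 0 <= snd p) (locally (th, s)))
               (locally (u th s))) /\
  C2_interior u /\
  (forall th s, 0 < s -> laplace_beltrami f u th s = 0) /\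
  (exists M, forall th s, 0 <= s -> Rabs (u th s) <= M).

Definition parabolic_end (f : R -> R -> pt3) : Prop :=
  forall u v, bounded_harmonic_on_end f u -> bounded_harmonic_on_end f v ->
    (forall th, u th 0 = v th 0) ->
    forall th s, 0 <= s -> u th s = v th s.

Definition smooth (g : R -> R) : Prop := forall n x, ex_derive_n g n x.

Definition centroid (g1 g2 : R -> R) (s : R) : R :=
  / s * RInt (fun t => g1 t / g2 t) 0 s.

(* The induced metric of the end is [rho^2 dtheta^2 + ds^2] with [rho = gamma1/gamma2], so
   harmonic functions satisfy [u_thth + rho rho' u_s + rho^2 u_ss = 0].  The radial function
   [k(s) = int_0^s (1 + 1/(1+t)) / rho(t) dt] is strictly superharmonic, and it tends to
   infinity: by AM-GM, [1/rho >= 2/A - rho/A^2], and a confined centroid bounds the mean of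
   [rho] by some [A].  If two bounded harmonic functions [u], [v] agree on the boundary but
   [u > v] somewhere, then [u - v - eps k] is negative far out and on the boundary, so it has
   a positive interior maximum, where the first and second derivative tests contradict strict
   superharmonicity.  Hence [u <= v], and symmetrically [v <= u]. *)

From Pilot Require Import Defs.
From Stdlib Require Import Reals Lra Classical ClassicalEpsilon List RList.
From Coquelicot Require Import Coquelicot.
Open Scope R_scope.

Lemma local_max_derivatives (f f' : R -> R) (x f'' r : R) :
  0 < r ->
  (forall y, Rabs (y - x) < r -> is_derive f y (f' y)) ->
  is_derive f' x f'' ->
  (forall y, Rabs (y - x) < r -> f y <= f x) ->
  f' x = 0 /\ f'' <= 0.
Proof.
intros Hr Hf Hf' Hmax.
assert (Hcrit : f' x = 0).
{ assert (Hlim : derivable_pt_lim f x (f' x)).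
  { apply is_derive_Reals, Hf. rewrite Rminus_diag, Rabs_R0; lra. }
  change (derive_pt f x (exist _ (f' x) Hlim) = 0).
  apply (deriv_maximum f (x - r) (x + r)); try lra.
  intros y H1 H2; apply Hmax, Rabs_def1; lra. }
split; [exact Hcrit|].
apply Rnot_lt_le; intros Hpos.
apply is_derive_Reals in Hf'.
destruct (Hf' (f'' / 2) ltac:(lra)) as [del Hdel].
assert (Hincr : forall h, 0 < h < Rmin del r -> 0 < f' (x + h)).
{ intros h Hh. pose proof (Rmin_l del r); pose proof (Rmin_r del r).
  specialize (Hdel h ltac:(lra) ltac:(rewrite Rabs_pos_eq; lra)).
  rewrite Hcrit, Rminus_0_r in Hdel. apply Rabs_def2 in Hdel.
  replace (f' (x + h)) with (f' (x + h) / h * h) by (field; lra).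
  apply Rmult_lt_0_compat; lra. }
set (h := Rmin del r / 2).
assert (Hh : 0 < h < Rmin del r /\ Rmin del r <= r).
{ pose proof (cond_pos del). unfold h, Rmin; destruct Rle_dec; lra. }
destruct (MVT_cor2 f f' x (x + h)) as [c [Hc Hcx]]; [lra| |].
{ intros c Hc. apply is_derive_Reals, Hf. rewrite Rabs_pos_eq; lra. }
assert (0 < f' c * (x + h - x)).
{ apply Rmult_lt_0_compat; [|lra].
  replace c with (x + (c - x)) by ring. apply Hincr; lra. }
assert (f (x + h) <= f x) by (apply Hmax; rewrite Rabs_pos_eq; lra).
lra.
Qed.

Definition in_rect (a b c d x y : R) : Prop := a <= x <= b /\ c <= y <= d.

Lemma sublist_such_that {T : Type} (Q : T -> Prop) (l : list T) :
  exists l', forall t, In t l' <-> In t l /\ Q t.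
Proof.
induction l as [|t0 l [l' Hl']].
- exists nil. simpl; tauto.
- destruct (classic (Q t0)) as [Ht0|Ht0].
  + exists (t0 :: l'). intros t. simpl. rewrite Hl'. split; [|tauto].
    intros [<-|]; tauto.
  + exists l'. intros t. simpl. rewrite Hl'. split; [tauto|].
    intros [[<-|] ?]; tauto.
Qed.

Lemma rect_finite_cover (P : R -> R -> R -> R -> Prop) (a b c d : R) :
  (forall x y, in_rect a b c d x y -> exists del, 0 < del /\
     forall x' y', in_rect a b c d x' y' -> Rabs (x' - x) < del -> Rabs (y' - y) < del ->
       P x y x' y') ->
  exists l : list (R * R), (forall t, In t l -> in_rect a b c d (fst t) (snd t)) /\
    forall x y, in_rect a b c d x y -> exists t, In t l /\ P (fst t) (snd t) x y.
Proof.
intros Hloc.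
assert (Hdel : forall t : Compactness.Tn 2 R, exists del : posreal,
   in_rect a b c d (fst t) (fst (snd t)) ->
   forall x' y', in_rect a b c d x' y' -> Rabs (x' - fst t) < del ->
     Rabs (y' - fst (snd t)) < del -> P (fst t) (fst (snd t)) x' y').
{ intros t. destruct (classic (in_rect a b c d (fst t) (fst (snd t)))) as [Hin|Hout].
  - destruct (Hloc _ _ Hin) as [del [Hpos Hp]]. exists (mkposreal del Hpos). intros _; exact Hp.
  - exists (mkposreal 1 Rlt_0_1). tauto. }
destruct (choice _ Hdel) as [delta Hdelta].
apply NNPP; intros Hno.
apply (compactness_list 2 (a, (c, tt)) (b, (d, tt)) delta); intros [l Hl].
destruct (sublist_such_that
  (fun t : Compactness.Tn 2 R => in_rect a b c d (fst t) (fst (snd t))) l) as [l' Hl'].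
apply Hno. exists (map (fun t : Compactness.Tn 2 R => (fst t, fst (snd t))) l'). split.
- intros t Ht. apply in_map_iff in Ht. destruct Ht as [t' [<- Ht']]. apply Hl' in Ht'. tauto.
- intros x y [Hx Hy].
  destruct (Hl (x, (y, tt))) as [[t1 [t2 []]] [Ht [Hbt Hct]]]; [simpl; tauto|].
  simpl in Hbt, Hct.
  assert (Hin : in_rect a b c d t1 t2) by (unfold in_rect; tauto).
  exists (t1, t2). split.
  + apply in_map_iff. exists (t1, (t2, tt)). split; [reflexivity|]. apply Hl'. auto.
  + apply (Hdelta (t1, (t2, tt))); simpl; [exact Hin|split; auto|tauto|tauto].
Qed.

Lemma usc_rect_max (F : R -> R -> R) (a b c d : R) : a <= b -> c <= d ->
  (forall x y, in_rect a b c d x y -> forall eps, 0 < eps -> exists del, 0 < del /\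
     forall x' y', in_rect a b c d x' y' -> Rabs (x' - x) < del -> Rabs (y' - y) < del ->
       F x' y' < F x y + eps) ->
  exists x0 y0, in_rect a b c d x0 y0 /\
    forall x y, in_rect a b c d x y -> F x y <= F x0 y0.
Proof.
intros Hab Hcd Husc.
assert (Hne : in_rect a b c d a c) by (split; lra).
destruct (rect_finite_cover (fun x y x' y' => F x' y' < F x y + 1) a b c d) as [l [_ Hl]].
{ intros x y Hxy. apply Husc; auto; lra. }
set (E := fun r => exists x y, in_rect a b c d x y /\ r = F x y).
assert (HE : bound E).
{ exists (MaxRlist (map (fun t => F (fst t) (snd t) + 1) l)).
  intros r [x [y [Hxy ->]]]. destruct (Hl x y Hxy) as [t [Ht Hlt]].
  eapply Rle_trans; [left; exact Hlt|]. apply MaxRlist_P1.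
  apply (in_map (fun t => F (fst t) (snd t) + 1)); exact Ht. }
destruct (completeness E HE (ex_intro _ (F a c) (ex_intro _ a (ex_intro _ c (conj Hne eq_refl)))))
  as [m [Hub Hlub]].
apply NNPP; intros Hno.
assert (Hlt : forall x y, in_rect a b c d x y -> F x y < m).
{ intros x y Hxy. destruct (Rle_lt_or_eq_dec (F x y) m) as [|Heq]; auto.
  { apply Hub. exists x, y; auto. }
  exfalso. apply Hno. exists x, y. split; auto. intros x' y' Hxy'.
  rewrite Heq. apply Hub. exists x', y'; auto. }
destruct (rect_finite_cover (fun x y x' y' => F x' y' < (F x y + m) / 2) a b c d)
  as [l2 [Hl2in Hl2]].
{ intros x y Hxy. destruct (Husc x y Hxy ((m - F x y) / 2)) as [del [Hdel Hp]].
  { specialize (Hlt x y Hxy). lra. }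
  exists del; split; auto. intros x' y' Hxy' H1 H2. specialize (Hp x' y' Hxy' H1 H2). lra. }
set (vals := map (fun t => (F (fst t) (snd t) + m) / 2) l2).
assert (Hmax : In (MaxRlist vals) vals).
{ apply MaxRlist_P2. destruct (Hl2 a c Hne) as [t [Ht _]].
  exists ((F (fst t) (snd t) + m) / 2). apply (in_map (fun t => (F (fst t) (snd t) + m) / 2)), Ht. }
assert (m <= MaxRlist vals).
{ apply Hlub. intros r [x [y [Hxy ->]]]. destruct (Hl2 x y Hxy) as [t [Ht Hlt2]].
  left; eapply Rlt_le_trans; [exact Hlt2|]. apply MaxRlist_P1.
  apply (in_map (fun t => (F (fst t) (snd t) + m) / 2)), Ht. }
apply in_map_iff in Hmax. destruct Hmax as [t [Ht Htl]].
specialize (Hlt _ _ (Hl2in t Htl)). lra.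
Qed.

Lemma half_plane_continuity_eps_delta (F : R -> R -> R) (x y : R) :
  filterlim (uncurry2 F) (within (fun p : R * R => 0 <= snd p) (locally (x, y)))
    (locally (F x y)) ->
  forall eps, 0 < eps -> exists del, 0 < del /\ forall x' y', 0 <= y' ->
    Rabs (x' - x) < del -> Rabs (y' - y) < del -> Rabs (F x' y' - F x y) < eps.
Proof.
intros HF eps Heps. apply filterlim_locally with (eps := mkposreal eps Heps) in HF.
destruct HF as [del Hdel]. exists del. split; [apply cond_pos|].
intros x' y' Hy' Hx Hy. apply (Hdel (x', y')); [split; assumption|exact Hy'].
Qed.

Lemma continuity_eps_delta (f : R -> R) (x : R) : continuous f x ->
  forall eps, 0 < eps -> exists del, 0 < del /\
    forall x', Rabs (x' - x) < del -> Rabs (f x' - f x) < eps.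
Proof.
intros Hf eps Heps. apply filterlim_locally with (eps := mkposreal eps Heps) in Hf.
destruct Hf as [del Hdel]. exists del. split; [apply cond_pos|].
intros x' Hx. apply (Hdel x'), Hx.
Qed.

(* Pointwise [2/A - r/A^2 <= 1/r], i.e. [(A - r)^2 >= 0]. *)
Lemma RInt_inv_lower_bound (r q : R -> R) (A S : R) : 0 < A -> 0 <= S ->
  ex_RInt r 0 S -> ex_RInt q 0 S ->
  (forall t, 0 <= t <= S -> 0 < r t /\ / r t <= q t) ->
  2 / A * S - RInt r 0 S / A ^ 2 <= RInt q 0 S.
Proof.
intros HA HS Hr Hq Hrq.
assert (Hlower : is_RInt (fun t => 2 / A - r t / A ^ 2) 0 S (2 / A * S - RInt r 0 S / A ^ 2)).
{ pose proof (is_RInt_minus (V:=R_NormedModule) (fun _ => 2 / A) (fun t => scal (/ A ^ 2) (r t))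
    0 S _ _ (is_RInt_const 0 S (2 / A))
    (is_RInt_scal r 0 S (/ A ^ 2) _ (RInt_correct (V:=R_CompleteNormedModule) r 0 S Hr))) as H.
  replace (2 / A * S - RInt r 0 S / A ^ 2)
    with (minus (scal (S - 0) (2 / A)) (scal (/ A ^ 2) (RInt r 0 S))).
  - revert H; apply is_RInt_ext; intros t _.
    unfold minus, plus, opp, scal; simpl; unfold mult; simpl. field; lra.
  - unfold minus, plus, opp, scal; simpl; unfold mult; simpl. field; lra. }
rewrite <- (is_RInt_unique _ _ _ _ Hlower).
apply RInt_le; [exact HS|eexists; exact Hlower|exact Hq|].
intros t Ht. destruct (Hrq t ltac:(lra)) as [Hpos Hle].
assert (0 <= (A - r t) ^ 2 / (r t * A ^ 2))
  by (apply Rdiv_le_0_compat; [apply pow2_ge_0|apply Rmult_lt_0_compat, pow_lt; lra]).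
replace ((A - r t) ^ 2 / (r t * A ^ 2)) with (/ r t - (2 / A - r t / A ^ 2)) in H
  by (field; lra).
lra.
Qed.

Section EndOfRevolution.
Variables g1 g2 : R -> R.
Hypothesis g1_derivable : forall s, ex_derive g1 s.
Hypothesis g2_derivable : forall s, ex_derive g2 s.
Hypothesis profile_pos : forall s, 0 <= s -> 0 < g1 s /\ 0 < g2 s.
Hypothesis arclength : forall s, 0 <= s -> ((Derive g1 s)^2 + (Derive g2 s)^2) / (g2 s)^2 = 1.

Definition rho (s : R) : R := g1 s / g2 s.

Let f := end_rev g1 g2.

Local Ltac derive_end_rev :=
  unfold d_th, d_s, f, end_rev, Rot, Defs.c1, Defs.c2, Defs.c3; simpl;
  apply is_derive_unique; auto_derive; auto;
  change (fun x => g1 x) with g1; change (fun x => g2 x) with g2; ring.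

Lemma d_th_end_rev1 th s : d_th (fun a b => Defs.c1 (f a b)) th s = - g1 s * sin th.
Proof. derive_end_rev. Qed.
Lemma d_th_end_rev2 th s : d_th (fun a b => Defs.c2 (f a b)) th s = g1 s * cos th.
Proof. derive_end_rev. Qed.
Lemma d_th_end_rev3 th s : d_th (fun a b => Defs.c3 (f a b)) th s = 0.
Proof. derive_end_rev. Qed.
Lemma d_s_end_rev1 th s : d_s (fun a b => Defs.c1 (f a b)) th s = Derive g1 s * cos th.
Proof. derive_end_rev. Qed.
Lemma d_s_end_rev2 th s : d_s (fun a b => Defs.c2 (f a b)) th s = Derive g1 s * sin th.
Proof. derive_end_rev. Qed.
Lemma d_s_end_rev3 th s : d_s (fun a b => Defs.c3 (f a b)) th s = Derive g2 s.
Proof. derive_end_rev. Qed.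

Lemma rho_pos s : 0 <= s -> 0 < rho s.
Proof. intros Hs. destruct (profile_pos s Hs). apply Rdiv_lt_0_compat; auto. Qed.

Lemma rho_derivable s : 0 <= s -> ex_derive rho s.
Proof.
intros Hs. destruct (profile_pos s Hs). unfold rho. auto_derive. repeat split; auto; lra.
Qed.

Lemma gTT_end_rev th s : 0 <= s -> gTT f th s = rho s ^ 2.
Proof.
intros Hs. destruct (profile_pos s Hs). pose proof (sin2_cos2 th) as Hsc. unfold Rsqr in Hsc.
unfold gTT, rho. rewrite d_th_end_rev1, d_th_end_rev2, d_th_end_rev3.
change (Defs.c3 (f th s)) with (g2 s).
replace ((- g1 s * sin th) ^ 2 + (g1 s * cos th) ^ 2 + 0 ^ 2)
  with (g1 s ^ 2 * (sin th * sin th + cos th * cos th)) by ring.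
rewrite Hsc. field. lra.
Qed.

Lemma gTS_end_rev th s : gTS f th s = 0.
Proof.
unfold gTS. rewrite d_th_end_rev1, d_th_end_rev2, d_th_end_rev3, d_s_end_rev1, d_s_end_rev2,
  d_s_end_rev3. ring.
Qed.

Lemma gSS_end_rev th s : 0 <= s -> gSS f th s = 1.
Proof.
intros Hs. pose proof (sin2_cos2 th) as Hsc. unfold Rsqr in Hsc.
unfold gSS. rewrite d_s_end_rev1, d_s_end_rev2, d_s_end_rev3.
change (Defs.c3 (f th s)) with (g2 s).
rewrite <- (arclength s Hs).
replace ((Derive g1 s * cos th) ^ 2 + (Derive g1 s * sin th) ^ 2 + Derive g2 s ^ 2)
  with (Derive g1 s ^ 2 * (sin th * sin th + cos th * cos th) + Derive g2 s ^ 2) by ring.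
rewrite Hsc. unfold Rdiv. ring.
Qed.

Lemma gdet_end_rev th s : 0 <= s -> gdet f th s = rho s ^ 2.
Proof. intros Hs. unfold gdet. rewrite gTT_end_rev, gSS_end_rev, gTS_end_rev by exact Hs. ring. Qed.

Lemma sqrt_gdet_end_rev th s : 0 <= s -> sqrt (gdet f th s) = rho s.
Proof. intros Hs. rewrite gdet_end_rev by exact Hs. apply sqrt_pow2. left; apply rho_pos, Hs. Qed.

Lemma laplace_beltrami_end_rev (u : R -> R -> R) th s : C2_interior u -> 0 < s ->
  laplace_beltrami f u th s =
  / rho s * (/ rho s * Derive (fun t => d_th u t s) th
             + (Derive rho s * d_s u th s + rho s * Derive (fun t => d_s u th t) s)).
Proof.
intros Hu Hs. destruct (Hu th s Hs) as [_ [_ [_ [_ [_ [Hss _]]]]]].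
unfold laplace_beltrami. rewrite sqrt_gdet_end_rev by lra. do 2 f_equal.
- unfold d_th at 1.
  rewrite (Derive_ext _ (fun a => / rho s * d_th u a s)); [apply Derive_scal|].
  intros a. pose proof (rho_pos s ltac:(lra)).
  rewrite sqrt_gdet_end_rev, gSS_end_rev, gTS_end_rev, gdet_end_rev by lra.
  field. lra.
- unfold d_s at 1.
  rewrite (Derive_ext_loc _ (fun b => rho b * d_s u th b));
    [apply Derive_mult; [apply rho_derivable; lra | exact Hss]|].
  exists (mkposreal s Hs). intros b Hb. change (Rabs (b - s) < s) in Hb. apply Rabs_def2 in Hb.
  pose proof (rho_pos b ltac:(lra)).
  rewrite sqrt_gdet_end_rev, gTT_end_rev, gTS_end_rev, gdet_end_rev by lra.
  field. lra.
Qed.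


Lemma harmonic_end_rev (u : R -> R -> R) th s : C2_interior u -> 0 < s ->
  laplace_beltrami f u th s = 0 ->
  Derive (fun t => d_th u t s) th + rho s * Derive rho s * d_s u th s
    + rho s ^ 2 * Derive (fun t => d_s u th t) s = 0.
Proof.
intros Hu Hs Hlap. rewrite laplace_beltrami_end_rev in Hlap by assumption.
pose proof (rho_pos s ltac:(lra)).
transitivity (rho s ^ 2 * 0); [|ring]. rewrite <- Hlap. field. lra.
Qed.

(* The density is built on [rho (Rabs t)] so that it is continuous on all of [R],
   although [rho] is only known to be positive on [0, oo). *)
Definition barrier_density (t : R) : R := (1 + / (1 + Rabs t)) / rho (Rabs t).

Definition barrier (s : R) : R := RInt barrier_density 0 s.

Lemma continuous_barrier_density t : continuous barrier_density t.
Proof.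
assert (Hrho : forall s, 0 <= s -> continuous rho s).
{ intros s Hs. apply (ex_derive_continuous (V:=R_NormedModule)), rho_derivable, Hs. }
pose proof (Rabs_pos t). pose proof (rho_pos (Rabs t) (Rabs_pos t)).
apply (continuous_mult (K:=R_AbsRing) (fun t => 1 + / (1 + Rabs t)) (fun t => / rho (Rabs t))).
- apply (continuous_plus (V:=R_NormedModule) (fun _ => 1) (fun t => / (1 + Rabs t)));
    [apply continuous_const|].
  apply continuous_Rinv_comp; [|lra].
  apply (continuous_plus (V:=R_NormedModule) (fun _ => 1) Rabs);
    [apply continuous_const|apply continuous_Rabs].
- apply continuous_Rinv_comp; [|lra].
  apply (continuous_comp Rabs rho); [apply continuous_Rabs|apply Hrho, Rabs_pos].
Qed.

Lemma ex_RInt_barrier_density a b : ex_RInt barrier_density a b.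
Proof.
apply (ex_RInt_continuous (V:=R_CompleteNormedModule)).
intros; apply continuous_barrier_density.
Qed.

Lemma is_derive_barrier s : is_derive barrier s (barrier_density s).
Proof.
apply (is_derive_RInt barrier_density barrier 0 s); [|apply continuous_barrier_density].
apply filter_forall; intros b.
apply (RInt_correct (V:=R_CompleteNormedModule)), ex_RInt_barrier_density.
Qed.

Lemma barrier0 : barrier 0 = 0.
Proof. apply (RInt_point (V:=R_CompleteNormedModule)). Qed.

Lemma ex_derive_barrier_density s : 0 < s -> ex_derive barrier_density s.
Proof.
intros Hs. pose proof (rho_pos s ltac:(lra)). pose proof (rho_derivable s ltac:(lra)).
apply (ex_derive_ext_loc (fun t => (1 + / (1 + t)) / rho t)).
- exists (mkposreal s Hs). intros b Hb. change (Rabs (b - s) < s) in Hb. apply Rabs_def2 in Hb.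
  unfold barrier_density. rewrite Rabs_pos_eq by lra. reflexivity.
- auto_derive. repeat split; auto; lra.
Qed.

(* The radial part of the Laplacian of [barrier] is [(rho * barrier_density)' / rho], and
   [rho * barrier_density = 1 + 1/(1+s)] is strictly decreasing. *)
Lemma barrier_superharmonic s : 0 < s ->
  rho s * Derive rho s * barrier_density s + rho s ^ 2 * Derive barrier_density s < 0.
Proof.
intros Hs. pose proof (rho_pos s ltac:(lra)).
assert (Hprod : Derive (fun t => rho t * barrier_density t) s = - / (1 + s) ^ 2).
{ rewrite (Derive_ext_loc _ (fun t => 1 + / (1 + t))).
  - apply is_derive_unique. auto_derive; [lra|]. field. lra.
  - exists (mkposreal s Hs). intros b Hb. change (Rabs (b - s) < s) in Hb. apply Rabs_def2 in Hb.
    pose proof (rho_pos b ltac:(lra)).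
    unfold barrier_density. rewrite Rabs_pos_eq by lra. field. lra. }
rewrite Derive_mult in Hprod by (apply rho_derivable || apply ex_derive_barrier_density; lra).
replace (rho s * Derive rho s * barrier_density s + rho s ^ 2 * Derive barrier_density s)
  with (rho s * (Derive rho s * barrier_density s + rho s * Derive barrier_density s)) by ring.
rewrite Hprod.
assert (0 < / (1 + s) ^ 2) by (apply Rinv_0_lt_compat, pow_lt; lra).
nra.
Qed.

Lemma barrier_unbounded : (exists L : R, is_lim (centroid g1 g2) p_infty L) ->
  forall B x0, exists S, x0 < S /\ B < barrier S.
Proof.
intros [L HL] B x0. apply is_lim_spec in HL.
destruct (HL (mkposreal 1 Rlt_0_1)) as [M HM]; simpl in HM.
set (A := Rabs L + 1).
assert (HA : 0 < A) by (unfold A; pose proof (Rabs_pos L); lra).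
set (S := Rmax (Rmax M 0) (Rmax x0 (A * B)) + 1).
assert (HS : M < S /\ 0 < S /\ x0 < S /\ A * B < S).
{ pose proof (Rmax_l M 0). pose proof (Rmax_r M 0).
  pose proof (Rmax_l x0 (A * B)). pose proof (Rmax_r x0 (A * B)).
  pose proof (Rmax_l (Rmax M 0) (Rmax x0 (A * B))).
  pose proof (Rmax_r (Rmax M 0) (Rmax x0 (A * B))). unfold S; lra. }
exists S. split; [lra|].
assert (Hrho : ex_RInt rho 0 S).
{ apply (ex_RInt_continuous (V:=R_CompleteNormedModule)). intros t Ht.
  rewrite Rmin_left in Ht by lra.
  apply (ex_derive_continuous (V:=R_NormedModule)), rho_derivable; lra. }
set (I := RInt rho 0 S : R).
assert (Hmean : I < A * S).
{ specialize (HM S ltac:(lra)). unfold centroid in HM. apply Rabs_def2 in HM.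
  pose proof (Rle_abs L).
  assert (Hlt : / S * I < A) by (unfold A, I, rho; lra).
  apply (Rmult_lt_compat_l S) in Hlt; [|lra].
  rewrite <- Rmult_assoc, Rinv_r, Rmult_1_l in Hlt by lra. lra. }
assert (Hlow : 2 / A * S - I / A ^ 2 <= barrier S).
{ apply RInt_inv_lower_bound; auto; [lra|apply ex_RInt_barrier_density|].
  intros t Ht. pose proof (rho_pos t ltac:(lra)). split; [lra|].
  unfold barrier_density. rewrite Rabs_pos_eq by lra.
  assert (0 < / (1 + t)) by (apply Rinv_0_lt_compat; lra).
  assert (0 < / rho t) by (apply Rinv_0_lt_compat; lra).
  unfold Rdiv. nra. }
assert (I / A ^ 2 < S / A).
{ apply (Rmult_lt_reg_l (A ^ 2)); [apply pow_lt; lra|].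
  replace (A ^ 2 * (I / A ^ 2)) with I by (field; lra).
  replace (A ^ 2 * (S / A)) with (A * S) by (field; lra). exact Hmean. }
assert (B < S / A).
{ apply (Rmult_lt_reg_l A); [exact HA|]. replace (A * (S / A)) with S by (field; lra). lra. }
replace (2 / A * S) with (2 * (S / A)) in Hlow by (field; lra).
lra.
Qed.

Section Comparison.
Variables u v : R -> R -> R.
Hypothesis u_harmonic : bounded_harmonic_on_end f u.
Hypothesis v_harmonic : bounded_harmonic_on_end f v.

Let gap (eps x y : R) : R := u x y - v x y - eps * barrier y.

Lemma no_interior_max eps xs ys r : 0 < eps -> 0 < r <= ys ->
  (forall x, Rabs (x - xs) < 1 -> gap eps x ys <= gap eps xs ys) ->
  (forall y, Rabs (y - ys) < r -> gap eps xs y <= gap eps xs ys) -> False.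
Proof.
intros Heps Hr Hmax_th Hmax_s.
destruct u_harmonic as [_ [_ [Cu [Lu _]]]]. destruct v_harmonic as [_ [_ [Cv [Lv _]]]].
assert (Hys : 0 < ys) by lra.
assert (Hth : Derive (fun t => d_th u t ys) xs - Derive (fun t => d_th v t ys) xs <= 0).
{ apply (local_max_derivatives (fun x => gap eps x ys) (fun t => d_th u t ys - d_th v t ys) xs _ 1);
    [lra| |apply (is_derive_minus (fun t => d_th u t ys) (fun t => d_th v t ys));
           apply Derive_correct; [apply (Cu xs ys Hys)|apply (Cv xs ys Hys)]
    |exact Hmax_th].
  intros x _. unfold gap.
  replace (d_th u x ys - d_th v x ys) with (d_th u x ys - d_th v x ys - 0) by ring.
  apply (is_derive_minus (fun t => u t ys - v t ys));
    [|apply (is_derive_const (K:=R_AbsRing) (V:=R_NormedModule))].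
  apply (is_derive_minus (fun t => u t ys) (fun t => v t ys));
    apply Derive_correct; [apply (Cu x ys Hys)|apply (Cv x ys Hys)]. }
destruct (local_max_derivatives (fun y => gap eps xs y)
  (fun t => d_s u xs t - d_s v xs t - eps * barrier_density t) ys
  (Derive (fun t => d_s u xs t) ys - Derive (fun t => d_s v xs t) ys
     - eps * Derive barrier_density ys) r) as [Hs1 Hs2]; [lra| | |exact Hmax_s|].
- intros y Hy. apply Rabs_def2 in Hy. unfold gap.
  apply (is_derive_minus (fun t => u xs t - v xs t)); [|apply is_derive_scal, is_derive_barrier].
  apply (is_derive_minus (fun t => u xs t) (fun t => v xs t));
    apply Derive_correct; [apply (Cu xs y ltac:(lra))|apply (Cv xs y ltac:(lra))].
- apply (is_derive_minus (fun t => d_s u xs t - d_s v xs t));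
    [|apply is_derive_scal, Derive_correct, ex_derive_barrier_density, Hys].
  apply (is_derive_minus (fun t => d_s u xs t) (fun t => d_s v xs t));
    apply Derive_correct; [apply (Cu xs ys Hys)|apply (Cv xs ys Hys)].
- pose proof (harmonic_end_rev u xs ys Cu Hys (Lu xs ys Hys)) as Hu0.
  pose proof (harmonic_end_rev v xs ys Cv Hys (Lv xs ys Hys)) as Hv0.
  pose proof (barrier_superharmonic ys Hys) as Hbar.
  assert (Hp2 : 0 < rho ys ^ 2) by (apply pow_lt, rho_pos; lra).
  assert (rho ys ^ 2 * (Derive (fun t => d_s u xs t) ys - Derive (fun t => d_s v xs t) ys
      - eps * Derive barrier_density ys) <= 0) by (apply Rmult_le_0_l; lra).
  assert (eps * (rho ys * Derive rho ys * barrier_density ys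
      + rho ys ^ 2 * Derive barrier_density ys) < 0) by nra.
  simpl in Hs1.
  assert (Hds : d_s u xs ys - d_s v xs ys = eps * barrier_density ys) by lra.
  assert (rho ys * Derive rho ys * (d_s u xs ys - d_s v xs ys)
          = eps * (rho ys * Derive rho ys * barrier_density ys)) by (rewrite Hds; ring).
  lra.
Qed.

Lemma gap_upper_semicontinuous eps a b S x y : 0 < eps -> in_rect a b 0 S x y ->
  forall e, 0 < e -> exists del, 0 < del /\ forall x' y', in_rect a b 0 S x' y' ->
    Rabs (x' - x) < del -> Rabs (y' - y) < del -> gap eps x' y' < gap eps x y + e.
Proof.
intros Heps [Hx Hy] e He.
destruct u_harmonic as [_ [Ku _]]. destruct v_harmonic as [_ [Kv _]].
destruct (half_plane_continuity_eps_delta u x y (Ku x y ltac:(lra)) (e / 3) ltac:(lra))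
  as [d1 [Hd1 P1]].
destruct (half_plane_continuity_eps_delta v x y (Kv x y ltac:(lra)) (e / 3) ltac:(lra))
  as [d2 [Hd2 P2]].
destruct (continuity_eps_delta barrier y
  (ex_derive_continuous (V:=R_NormedModule) _ _ (ex_intro _ _ (is_derive_barrier y)))
  (e / 3 / eps) ltac:(apply Rdiv_lt_0_compat; lra)) as [d3 [Hd3 P3]].
exists (Rmin d1 (Rmin d2 d3)). split; [repeat apply Rmin_pos; assumption|].
intros x' y' [Hx' Hy'] Hxx Hyy.
pose proof (Rmin_l d1 (Rmin d2 d3)). pose proof (Rmin_r d1 (Rmin d2 d3)).
pose proof (Rmin_l d2 d3). pose proof (Rmin_r d2 d3).
specialize (P1 x' y' ltac:(lra) ltac:(lra) ltac:(lra)).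
specialize (P2 x' y' ltac:(lra) ltac:(lra) ltac:(lra)).
specialize (P3 y' ltac:(lra)).
apply Rabs_def2 in P1. apply Rabs_def2 in P2. apply Rabs_def2 in P3.
assert (eps * (barrier y - barrier y') < e / 3).
{ replace (e / 3) with (eps * (e / 3 / eps)) by (field; lra).
  apply Rmult_lt_compat_l; lra. }
unfold gap. lra.
Qed.

Lemma harmonic_comparison : (exists L : R, is_lim (centroid g1 g2) p_infty L) ->
  (forall th, u th 0 = v th 0) -> forall th s, 0 <= s -> u th s <= v th s.
Proof.
intros Hcentroid Hbdry th0 s0 Hs0. apply Rnot_lt_le; intros Hlt.
destruct u_harmonic as [Pu [_ [_ [_ [Mu HMu]]]]].
destruct v_harmonic as [Pv [_ [_ [_ [Mv HMv]]]]].
set (a := u th0 s0 - v th0 s0).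
set (eps := a / (2 * (Rabs (barrier s0) + 1))).
pose proof (Rabs_pos (barrier s0)). pose proof (Rle_abs (barrier s0)).
assert (Heps : 0 < eps) by (apply Rdiv_lt_0_compat; unfold a; lra).
assert (Hsmall : eps * barrier s0 < a / 2).
{ apply Rle_lt_trans with (eps * Rabs (barrier s0)); [apply Rmult_le_compat_l; lra|].
  unfold eps. apply (Rmult_lt_reg_r (2 * (Rabs (barrier s0) + 1))); [lra|].
  replace (a / (2 * (Rabs (barrier s0) + 1)) * Rabs (barrier s0) * (2 * (Rabs (barrier s0) + 1)))
    with (a * Rabs (barrier s0)) by (field; lra).
  unfold a; nra. }
destruct (barrier_unbounded Hcentroid ((Mu + Mv) / eps) s0) as [S [HS HkS]].
assert (HkS' : Mu + Mv < eps * barrier S).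
{ apply (Rmult_lt_compat_l eps) in HkS; [|exact Heps].
  replace (eps * ((Mu + Mv) / eps)) with (Mu + Mv) in HkS by (field; lra). exact HkS. }
pose proof PI2_1.
destruct (usc_rect_max (gap eps) th0 (th0 + 2 * PI) 0 S) as [xs [ys [[Hxs Hys] Hmax]]];
  [lra|lra|intros; apply gap_upper_semicontinuous; assumption|].
assert (Hpos : 0 < gap eps xs ys).
{ assert (Hstart : gap eps th0 s0 <= gap eps xs ys) by (apply Hmax; split; lra).
  unfold gap, a in *. lra. }
assert (Hys0 : ys <> 0).
{ intros ->. unfold gap in Hpos. rewrite Hbdry, barrier0 in Hpos. lra. }
assert (HysS : ys <> S).
{ intros ->. unfold gap in Hpos.
  pose proof (HMu xs S ltac:(lra)) as HuS. pose proof (HMv xs S ltac:(lra)) as HvS.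
  apply Rabs_le_between in HuS. apply Rabs_le_between in HvS. lra. }
assert (Hperiodic : forall x y, gap eps (x + 2 * PI) y = gap eps x y).
{ intros x y. unfold gap. rewrite Pu, Pv. reflexivity. }
apply (no_interior_max eps xs ys (Rmin ys (S - ys))); [exact Heps| | |].
- split; [apply Rmin_pos; lra|apply Rmin_l].
- intros x Hx. apply Rabs_def2 in Hx.
  destruct (Rlt_or_le x th0) as [Hl|Hl].
  + rewrite <- Hperiodic. apply Hmax. split; lra.
  + destruct (Rle_or_lt x (th0 + 2 * PI)) as [Hr|Hr]; [apply Hmax; split; lra|].
    replace x with ((x - 2 * PI) + 2 * PI) by ring. rewrite Hperiodic. apply Hmax. split; lra.
- intros y Hy. apply Rabs_def2 in Hy.
  pose proof (Rmin_l ys (S - ys)). pose proof (Rmin_r ys (S - ys)).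
  apply Hmax. split; lra.
Qed.

End Comparison.

End EndOfRevolution.

Theorem theorem8p3 (g1 g2 : R -> R) :
  smooth g1 -> smooth g2 ->
  (forall s, 0 <= s -> 0 < g1 s /\ 0 < g2 s) ->
  (* regular *)
  (forall s, 0 <= s -> (Derive g1 s, Derive g2 s) <> (0, 0)) ->
  (* parametrized by hyperbolic arc length *)
  (forall s, 0 <= s -> ((Derive g1 s)^2 + (Derive g2 s)^2) / (g2 s)^2 = 1) ->
  (* confined centroid *)
  (exists L : R, is_lim (centroid g1 g2) p_infty L) ->
  parabolic_end (end_rev g1 g2).
Proof.
intros Hg1 Hg2 Hpos _ Harc Hcentroid u v Hu Hv Hbdry th s Hs.
assert (Hd1 : forall s, ex_derive g1 s) by exact (Hg1 1%nat).
assert (Hd2 : forall s, ex_derive g2 s) by exact (Hg2 1%nat).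
apply Rle_antisym.
- exact (harmonic_comparison g1 g2 Hd1 Hd2 Hpos Harc u v Hu Hv Hcentroid Hbdry th s Hs).
- exact (harmonic_comparison g1 g2 Hd1 Hd2 Hpos Harc v u Hv Hu Hcentroid
           (fun th => eq_sym (Hbdry th)) th s Hs).
Qed.
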